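(* Let $M$ be a connected matroid, let $N$ be a minor of $M$ with no loops and no coloops, and let $(A,B)$ be a $2$-separation of $M$ with $B\cap E(N)=\{f\}$. If $f$ is not in series or in parallel with any other element of $M$, then there exists an element $e\in B\setminus\{f\}$ such that both $M\setminus e$ and $M/e$ have $N$ as a minor.
   Context: $\lambda_M(X) = \rank_M(X) + \rank_M(E(M)\setminus X) - \rank(M)$. A $2$-separation of $M$ is a partition $(A,B)$ of $E(M)$ with $|A|,|B|\geq 2$ and $\lambda_M(A)<2$. ''$M'$ has $N$ as a minor'' means $N$ itself (with labelled ground set) equals $M'/C\setminus D$ for some disjoint $C,D\subseteq E(M')$. *)

From mathcomp Require Import all_boot.
Set Implicit Arguments. Unset Strict Implicit. Unset Printing Implicit Defensive.

Section Matroids.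
Variable T : finType.

Record mstruct := MStruct { ground : {set T}; indep : {set {set T}} }.

Definition is_matroid (M : mstruct) : Prop :=
  [/\ forall I : {set T}, I \in indep M -> I \subset ground M,
      set0 \in indep M,
      forall I J : {set T}, J \in indep M -> I \subset J -> I \in indep M &
      forall I J : {set T}, I \in indep M -> J \in indep M -> #|I| < #|J| ->
        exists2 x, x \in J :\: I & x |: I \in indep M].

Definition rank (M : mstruct) (X : {set T}) : nat :=
  \max_(I in indep M | I \subset X) #|I|.

Definition mrank (M : mstruct) : nat := rank M (ground M).

Definition lambda (M : mstruct) (X : {set T}) : nat :=
  rank M X + rank M (ground M :\: X) - mrank M.

Definition two_separation (M : mstruct) (A B : {set T}) : Prop :=
  [/\ A :|: B = ground M, [disjoint A & B], 2 <= #|A|, 2 <= #|B| &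
      lambda M A < 2].

Definition basis (M : mstruct) (B : {set T}) : bool :=
  (B \in indep M) && [forall x, (x \in ground M :\: B) ==> (x |: B \notin indep M)].

Definition dual (M : mstruct) : mstruct :=
  MStruct (ground M)
    [set I : {set T} | (I \subset ground M) && [exists B : {set T}, basis M B && [disjoint I & B]]].

Definition circuit (M : mstruct) (C : {set T}) : Prop :=
  [/\ C \subset ground M, C \notin indep M &
      forall Y : {set T}, Y \proper C -> Y \in indep M].

Definition cocircuit (M : mstruct) (C : {set T}) : Prop := circuit (dual M) C.

Definition is_loop (M : mstruct) (e : T) : Prop :=
  e \in ground M /\ [set e] \notin indep M.

Definition is_coloop (M : mstruct) (e : T) : Prop := is_loop (dual M) e.

Definition in_parallel (M : mstruct) (e f : T) : Prop := circuit M [set e; f].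
Definition in_series (M : mstruct) (e f : T) : Prop := cocircuit M [set e; f].

Definition connected (M : mstruct) : Prop :=
  forall x y, x \in ground M -> y \in ground M -> x != y ->
    exists C : {set T}, [/\ circuit M C, x \in C & y \in C].

Definition delete (M : mstruct) (D : {set T}) : mstruct :=
  MStruct (ground M :\: D) [set I : {set T} in indep M | I \subset ground M :\: D].

Definition contract (M : mstruct) (C : {set T}) : mstruct :=
  MStruct (ground M :\: C)
    [set I : {set T} | (I \subset ground M :\: C) &&
             (rank M (I :|: C) == #|I| + rank M C)].

Definition has_minor (M N : mstruct) : Prop :=
  exists C D : {set T},
    [/\ C :|: D \subset ground M, [disjoint C & D] &
        N = delete (contract M C) D].

End Matroids.

From mathcomp Require Import all_boot.
From mathcomp Require Import zify.
From Stdlib Require Import Classical.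
Set Implicit Arguments. Unset Strict Implicit. Unset Printing Implicit Defensive.

(* Collapsing the side [A] of the 2-separation to a single basepoint [p] turns
   the side [B] into a matroid on [B] plus [p] (the 2-sum decomposition). Call
   [K], a subset of [B - f], parallelizing when [p] and [f] are parallel
   non-loops after contracting [K]. Then [N] is obtained from [M] by contracting
   [(C \cap A) \cup K] and deleting the rest of [B - f] and [D \cap A], for every
   parallelizing [K]; and [C \cap B] is parallelizing because [f] is neither a
   loop nor a coloop of [N]. Given two parallelizing sets, an element [e] in one
   but not the other can be deleted (using the set avoiding [e]) and contracted
   (using the set containing [e]). If [C \cap B] is the only parallelizing set,
   an induction on its size, contracting one element at a time, yields an
   element of [B] in series or in parallel with [f]. *)

(* [lia] ignores equations between naturals stated at type [Equality.sort _]
   (as produced by [eqP]); restate them at [nat] and drop the other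
   hypotheses, which only slow [lia] down. *)
Ltac nat_eqs := repeat match goal with
  | H : @eq (Equality.sort _) ?a ?b |- _ =>
      let H' := fresh "He" in have H' : (a : nat) = (b : nat) := H; clear H
  | H : ~ (@eq (Equality.sort _) ?a ?b) |- _ =>
      let H' := fresh "He" in have H' : ~ ((a : nat) = (b : nat)) := H; clear H
  end.
Ltac keep_arith := repeat match goal with
  | H : ?P |- _ => lazymatch P with
      | is_true (_ <= _) => fail
      | @eq nat _ _ => fail
      | ~ (@eq nat _ _) => fail
      | _ => clear H
      end
  end.
Ltac rk_lia := intros; nat_eqs; keep_arith; lia.

Ltac case_mem := repeat match goal with
  | |- context [?a \in ?S] => case: (a \in S)
  | |- context [?a == ?b] => case: (a == b)
  end; by [].

Ltac set_cases_at w tac :=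
  rewrite ?inE;
  repeat match goal with |- context [w == ?c] => case: (w =P c) => [->|_] end;
  rewrite ?eqxx /=; tac; case_mem.

Ltac set_cases tac :=
  let w := fresh "w" in
  first [apply/setP => w | apply/subsetP => w]; set_cases_at w tac.

Lemma subset_imply (T : finType) (X Y : {set T}) :
  X \subset Y -> forall z, (z \in X) ==> (z \in Y).
Proof. by move=> sXY z; apply/implyP; apply: (subsetP sXY). Qed.

Lemma disjoint_nand (T : finType) (X Y : {set T}) :
  [disjoint X & Y] -> forall z, ~~ ((z \in X) && (z \in Y)).
Proof. by move=> dXY z; apply/negP => /andP[zX zY]; rewrite (disjointFr dXY zX) in zY. Qed.

Lemma measure_ind (A : Type) (m : A -> nat) (P : A -> Prop) :
  (forall x, (forall y, m y < m x -> P y) -> P x) -> forall x, P x.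
Proof.
move=> h x; move: {2}(m x) (leqnn (m x)) => n.
by elim: n x => [|n IH] x hx; apply: h => y hy; [lia | apply: IH; lia].
Qed.

Lemma setUD_sub (T : finType) (I X : {set T}) : I \subset X -> I :|: (X :\: I) = X.
Proof. by move=> sIX; rewrite -{2}(setID X I) (setIidPr sIX). Qed.

(** * Rank functions *)

Section RankFunction.

Variable U : finType.

Definition rankfun (R : {set U} -> nat) : Prop :=
  [/\ forall X : {set U}, R X <= #|X|, forall X Y : {set U}, X \subset Y -> R X <= R Y &
      forall X Y : {set U}, R (X :|: Y) + R (X :&: Y) <= R X + R Y].

Variables (R : {set U} -> nat) (hR : rankfun R).
Implicit Types (X Y Z I J S : {set U}) (x z : U).

Lemma rk_le_card X : R X <= #|X|.
Proof. by case: hR. Qed.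

Lemma rk_mono X Y : X \subset Y -> R X <= R Y.
Proof. by case: hR => _ h _; apply: h. Qed.

Lemma rk_submod X Y : R (X :|: Y) + R (X :&: Y) <= R X + R Y.
Proof. by case: hR. Qed.

Lemma rk_set0 : R set0 = 0.
Proof. by have := rk_le_card set0; rewrite cards0; lia. Qed.

Lemma rk_subadd X Y : R (X :|: Y) <= R X + R Y.
Proof. by have := rk_submod X Y; lia. Qed.

Lemma rk_set1 x : R [set x] <= 1.
Proof. by have := rk_le_card [set x]; rewrite cards1. Qed.

Lemma rk_setU1_le x X : R (x |: X) <= (R X).+1.
Proof. by have := rk_subadd [set x] X; have := rk_set1 x; lia. Qed.

Lemma rk_setU1 x X : R X <= R (x |: X).
Proof. exact/rk_mono/subsetUr. Qed.

Lemma rk_spanU X Y Z : X \subset Y -> R X = R Y -> R (X :|: Z) = R (Y :|: Z).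
Proof.
move=> sXY eXY.
have h1 : R (X :|: Z) <= R (Y :|: Z) by apply/rk_mono/setSU.
have := rk_submod Y (X :|: Z).
rewrite setUA (setUidPl sXY).
have : R X <= R (Y :&: (X :|: Z)) by apply: rk_mono; rewrite subsetI sXY subsetUl.
lia.
Qed.

Lemma rk_spanU1 X Y z : (X \subset Y \/ Y \subset X) -> R X = R Y -> R (z |: X) = R (z |: Y).
Proof.
by case=> s e; rewrite !(setUC [set z]); [|apply/esym]; apply: rk_spanU.
Qed.

Lemma rk_spannedU X Z : (forall z, z \in Z -> R (z |: X) = R X) -> R (X :|: Z) = R X.
Proof.
elim/(@measure_ind _ (fun Z : {set U} => #|Z|)): Z => Z IH hZ.
case: (set_0Vmem Z) => [->|[z zZ]]; first by rewrite setU0.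
have IH' : R (X :|: (Z :\ z)) = R X.
  apply: IH; first by rewrite (cardsD1 z Z) zZ.
  by move=> w; rewrite in_setD1 => /andP[_ /hZ].
have := rk_spanU [set z] (subsetUl X (Z :\ z)) (esym IH').
have -> : X :|: (Z :\ z) :|: [set z] = X :|: Z by rewrite -setUA (setUC _ [set z]) setD1K.
by rewrite setUC -/(z |: X) hZ.
Qed.

Lemma rk_spannedS X Y z : X \subset Y -> R (z |: X) = R X -> R (z |: Y) = R Y.
Proof.
move=> sXY e.
have := rk_submod (z |: X) Y.
rewrite -setUA (setUidPr sXY).
have : R X <= R ((z |: X) :&: Y) by apply: rk_mono; rewrite subsetI subsetUr sXY.
have := rk_setU1 z Y.
lia.
Qed.

Lemma rk_indep_extend I X : I \subset X -> R I = #|I| ->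
  exists J, [/\ I \subset J, J \subset X, R J = #|J| & R J = R X].
Proof.
elim/(@measure_ind _ (fun I : {set U} => #|X :\: I|)): I => I IH sIX hI.
case: (boolP [exists z, (z \in X :\: I) && (R (z |: I) != R I)]).
  case/existsP => z /andP[/setDP[zX zI] nz].
  have hz : R (z |: I) = #|z |: I|.
    rewrite cardsU1 zI /=; have := rk_setU1_le z I; have := rk_setU1 z I.
    move: nz => /eqP; lia.
  have [||| J [sIJ sJX hJ eJ]] := IH (z |: I).
  - apply: proper_card; rewrite properEneq setDS ?subsetUr // andbT.
    apply/eqP => e; have : z \in X :\: (z |: I) by rewrite e inE zX zI.
    by rewrite !inE eqxx.
  - by rewrite subUset sub1set zX sIX.
  - exact: hz.
  by exists J; split=> //; apply: subset_trans sIJ; apply: subsetUr.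
move=> hno; exists I; split => //.
rewrite -(setUD_sub sIX) rk_spannedU // => z zXI.
by apply/eqP; apply: contraNT hno => hne; apply/existsP; exists z; rewrite zXI hne.
Qed.

Lemma rk_indep_ex X : exists I, [/\ I \subset X, R I = #|I| & R I = R X].
Proof.
have [J [_ sJX hJ eJ]] := @rk_indep_extend set0 X (sub0set X) (etrans rk_set0 (esym (cards0 _))).
by exists J.
Qed.

Lemma rk_indepS S X : R S = #|S| -> X \subset S -> R X = #|X|.
Proof.
move=> hS sXS.
have := rk_subadd X (S :\: X); rewrite setUD_sub // hS.
have := rk_le_card (S :\: X); have := rk_le_card X.
rewrite (cardsD S X) (setIidPr sXS); have := subset_leq_card sXS; lia.
Qed.

Lemma rk_exchange X z x :
  R (z |: X) = (R X).+1 -> R (z |: (x |: X)) = R (x |: X) ->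
  R (x |: (z |: X)) = R (z |: X).
Proof.
move=> h1 h2; rewrite setUCA.
have := rk_setU1_le x X; have := rk_setU1 x X.
have : R (z |: X) <= R (z |: (x |: X)) by apply/rk_mono/setUS/subsetUr.
lia.
Qed.

(* Submodularity applied to [z |: S1] and [z |: S2], whose union is independent. *)
Lemma rk_spanned_meet (S1 S2 : {set U}) z :
  R (S1 :|: S2) = #|S1 :|: S2| -> R (z |: S1) = R S1 -> R (z |: S2) = R S2 ->
  R (z |: (S1 :&: S2)) = R (S1 :&: S2).
Proof.
move=> hI h1 h2.
have e1 := rk_indepS hI (subsetUl S1 S2).
have e2 := rk_indepS hI (subsetUr S1 S2).
have e3 := rk_indepS hI (subset_trans (subsetIl S1 S2) (subsetUl S1 S2)).
have := rk_submod (z |: S1) (z |: S2).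
rewrite setUACA setUid -setUIr.
have := rk_setU1 z (S1 :|: S2); have := rk_setU1 z (S1 :&: S2).
have := cardsUI S1 S2.
lia.
Qed.

Lemma rk_increment_antimono Y Y' K : Y \subset Y' -> R Y + R (Y' :|: K) <= R Y' + R (Y :|: K).
Proof.
move=> sYY'; have := rk_submod Y' (Y :|: K).
rewrite setUA (setUidPl sYY').
have : R Y <= R (Y' :&: (Y :|: K)) by apply: rk_mono; rewrite subsetI sYY' subsetUl.
lia.
Qed.

End RankFunction.

(** * Matroids through their rank functions *)

Section MatroidRank.

Variable T : finType.
Implicit Types (M : mstruct T) (R : {set T} -> nat) (C D I J X Y Z : {set T}).

Lemma indep_card_le_rank M X I : I \in indep M -> I \subset X -> #|I| <= rank M X.
Proof.
move=> hI sIX.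
exact: (leq_bigmax_cond (P := fun J => (J \in indep M) && (J \subset X)) (F := fun J => #|J|)
                        I (introT andP (conj hI sIX))).
Qed.

Lemma rank_le M X m :
  (forall I, I \in indep M -> I \subset X -> #|I| <= m) -> rank M X <= m.
Proof. by move=> h; apply/bigmax_leqP => I /andP[hI sIX]; apply: h. Qed.

Lemma rank_witness M X : is_matroid M ->
  exists I, [/\ I \in indep M, I \subset X & #|I| = rank M X].
Proof.
case=> _ h0 _ _.
have P0 : (set0 \in indep M) && (set0 \subset X) by rewrite h0 sub0set.
rewrite /rank (bigmax_eq_arg set0 P0).
by case: arg_maxnP => //= I /andP[hI sIX] _; exists I.
Qed.

Lemma rank_augment M X I : is_matroid M -> I \in indep M -> I \subset X ->
  exists J, [/\ J \in indep M, I \subset J, J \subset X & #|J| = rank M X].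
Proof.
move=> hM; have [J0 [hJ0 sJ0 cJ0]] := rank_witness X hM.
case: hM => _ _ _ haug.
elim/(@measure_ind _ (fun I : {set T} => rank M X - #|I|)): I => I IH hI sIX.
have hIX := indep_card_le_rank hI sIX.
case: (ltnP #|I| #|J0|) => hlt; last by exists I; split => //; lia.
have [x /setDP[xJ0 xI] hx] := haug I J0 hI hJ0 hlt.
have [||J [hJ sxJ sJX cJ]] := IH (x |: I) _ hx.
- by rewrite cardsU1 xI; lia.
- by rewrite subUset sub1set (subsetP sJ0 x xJ0) sIX.
by exists J; split => //; apply: subset_trans sxJ; apply: subsetUr.
Qed.

Lemma indep_rank M I : is_matroid M -> (I \in indep M) = (rank M I == #|I|).
Proof.
move=> hM; apply/idP/eqP => [hI|e].
  apply/eqP; rewrite eqn_leq indep_card_le_rank // andbT.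
  by apply: rank_le => J _ sJ; apply: subset_leq_card.
have [J [hJ sJ cJ]] := rank_witness I hM.
suff <- : J = I by [].
by apply/eqP; rewrite eqEcard sJ /=; lia.
Qed.

Lemma rankfun_rank M : is_matroid M -> rankfun (rank M).
Proof.
move=> hM; have hd : forall I J, J \in indep M -> I \subset J -> I \in indep M by case: hM.
split.
- by move=> X; apply: rank_le => I _ sI; apply: subset_leq_card.
- move=> X Y sXY; apply: rank_le => I hI sI.
  by apply: indep_card_le_rank => //; apply: subset_trans sXY.
move=> X Y.
have [I0 [hI0 sI0 cI0]] := rank_witness (X :&: Y) hM.
have sI0XY : I0 \subset X :|: Y.
  by apply: subset_trans sI0 _; apply: subset_trans (subsetIl X Y) (subsetUl X Y).
have [J [hJ sIJ sJ cJ]] := rank_augment hM hI0 sI0XY.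
have trace Z : #|J :&: Z| <= rank M Z.
  by apply: indep_card_le_rank; [apply: hd hJ _; apply: subsetIl | apply: subsetIr].
have := trace X; have := trace Y; have := trace (X :&: Y).
have : #|I0| <= #|J :&: (X :&: Y)| by apply: subset_leq_card; rewrite subsetI sIJ sI0.
have := cardsUI (J :&: X) (J :&: Y).
rewrite -setIUr (setIidPl sJ) setIACA setIid.
lia.
Qed.

(* Matroid operations are handled through their rank functions: [rank_of M R]
   says that [R] is a rank function whose independent sets are those of [M]. *)
Definition rank_of M R : Prop :=
  [/\ rankfun R, forall I, (I \in indep M) = (R I == #|I|) &
      forall I, I \in indep M -> I \subset ground M].

Lemma rank_of_rank M : is_matroid M -> rank_of M (rank M).
Proof. by move=> hM; split; [exact: rankfun_rank | move=> I; exact: indep_rank | case: hM]. Qed.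

Lemma rank_ofE M R X : rank_of M R -> rank M X = R X.
Proof.
case=> hR hI _; apply/eqP; rewrite eqn_leq; apply/andP; split.
  by apply: rank_le => I; rewrite hI => /eqP <- sI; apply: rk_mono.
have [I [sI h1 <-]] := rk_indep_ex hR X.
by rewrite h1; apply: indep_card_le_rank => //; rewrite hI h1.
Qed.

Lemma rank_of_ground M R X : rank_of M R -> R X = R (X :&: ground M).
Proof.
move=> hs; rewrite -!(rank_ofE _ hs); case: hs => _ _ hg.
apply/eqP; rewrite eqn_leq; apply/andP; split; apply: rank_le => I hI sI.
  by apply: indep_card_le_rank => //; rewrite subsetI sI hg.
by apply: indep_card_le_rank => //; apply: subset_trans sI (subsetIl _ _).
Qed.

Lemma rank_of_inj M1 M2 R1 R2 : rank_of M1 R1 -> rank_of M2 R2 -> ground M1 = ground M2 ->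
  (forall I, I \subset ground M1 -> R1 I = R2 I) -> M1 = M2.
Proof.
case: M1 => g1 i1; case: M2 => g2 i2 /= [_ h1 hg1] [_ h2 hg2] eg hR; subst g2.
congr MStruct; apply/setP => I.
case: (boolP (I \subset g1)) => sI; first by rewrite h1 h2 hR.
by apply/idP/idP => [/hg1|/hg2] s; rewrite s in sI.
Qed.

Lemma rankfun_delete R D : rankfun R -> rankfun (fun Z => R (Z :\: D)).
Proof.
move=> hR; split.
- by move=> X; apply: leq_trans (rk_le_card hR _) (subset_leq_card (subsetDl _ _)).
- by move=> X Y sXY; apply/(rk_mono hR)/setSD.
move=> X Y; rewrite setDUl setDIl.
exact: (rk_submod hR).
Qed.

Lemma rankfun_contract R C : rankfun R -> rankfun (fun Z => R (Z :|: C) - R C).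
Proof.
move=> hR; have geC X : R C <= R (X :|: C) by apply/(rk_mono hR)/subsetUr.
split.
- by move=> X; have := rk_subadd hR X C; have := rk_le_card hR X; lia.
- move=> X Y sXY; have : R (X :|: C) <= R (Y :|: C) by apply/(rk_mono hR)/setSU.
  lia.
move=> X Y; have := rk_submod hR (X :|: C) (Y :|: C).
rewrite setUACA setUid -setUIl.
have := geC X; have := geC Y; have := geC (X :&: Y); have := geC (X :|: Y).
lia.
Qed.

Lemma rank_of_delete M R D : rank_of M R -> rank_of (delete M D) (fun Z => R (Z :\: D)).
Proof.
case=> hR hI hg; split; [exact: rankfun_delete | move=> I | ]; last first.
  by move=> I; rewrite inE => /andP[].
rewrite inE hI; apply/idP/eqP => [/andP[/eqP hRI sI]|hRI].
  by move: sI; rewrite subsetD => /andP[_ /setDidPl ->].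
have eID : I :\: D = I.
  apply/eqP; rewrite eqEcard subsetDl /=.
  by have := rk_le_card hR (I :\: D); lia.
rewrite eID in hRI; rewrite hRI eqxx /=.
by rewrite -eID; apply/setSD/hg; rewrite hI hRI.
Qed.

Lemma rank_of_contract M R C :
  rank_of M R -> rank_of (contract M C) (fun Z => R (Z :|: C) - R C).
Proof.
move=> hs; have [hR hI hg] := hs.
split; [exact: rankfun_contract | move=> I | ]; last first.
  by move=> I; rewrite inE => /andP[].
rewrite inE !(rank_ofE _ hs); apply/idP/eqP => [/andP[_ /eqP ->]|h]; first by rewrite addnK.
have hC : R C <= R (I :|: C) by apply/(rk_mono hR)/subsetUr.
apply/andP; split; last by apply/eqP; lia.
set I' := I :&: (ground M :\: C).
have s1 : (I :|: C) :&: ground M \subset I' :|: C by set_cases idtac.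
have := rk_mono hR s1; rewrite -(rank_of_ground _ hs).
have := rk_subadd hR I' C; have := rk_le_card hR I'.
have : #|I'| <= #|I| by apply/subset_leq_card/subsetIl.
move=> c0 c1 c2 c3.
suff <- : I' = I by apply: subsetIr.
by apply/eqP; rewrite eqEcard subsetIl /=; lia.
Qed.

Lemma rank_of_dual_indep M R I : rank_of M R ->
  (I \in indep (dual M)) = (I \subset ground M) && (R (ground M :\: I) == R (ground M)).
Proof.
case=> hR hI hg.
rewrite /dual /= inE; case sIE: (I \subset ground M) => //=.
apply/existsP/eqP => [[B /andP[/andP[hB hmax] dIB]]|h].
  have hBE := hg B hB.
  have eB : R B = #|B| by apply/eqP; rewrite -hI.
  have e1 : R (B :|: (ground M :\: B)) = R B.
    apply: (rk_spannedU hR) => z zEB.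
    move: hmax => /forallP /(_ z); rewrite zEB /= hI.
    move: zEB; rewrite inE => /andP[zB _]; rewrite cardsU1 zB.
    by have := rk_setU1_le hR z B; have := rk_setU1 hR z B; lia.
  rewrite setUD_sub // in e1.
  have sB : B \subset ground M :\: I by rewrite subsetD hBE disjoint_sym.
  by have := rk_mono hR sB; have := rk_mono hR (subsetDl (ground M) I); lia.
have [B [sB hB1 hB2]] := rk_indep_ex hR (ground M :\: I).
have hBi : B \in indep M by rewrite hI hB1.
have sBE : B \subset ground M by apply: subset_trans sB (subsetDl _ _).
exists B; rewrite /basis hBi /=; apply/andP; split.
  apply/forallP => z; apply/implyP => /setDP[zE zB].
  rewrite hI cardsU1 zB.
  have : R (z |: B) <= R (ground M) by apply: (rk_mono hR); rewrite subUset sub1set zE sBE.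
  lia.
by move: sB; rewrite subsetD disjoint_sym => /andP[].
Qed.

Lemma has_minor_delete1 M N C D e : is_matroid M -> e \in D ->
  [/\ C :|: D \subset ground M, [disjoint C & D] & N = delete (contract M C) D] ->
  has_minor (delete M [set e]) N.
Proof.
move=> hM eD [sCD dCD ->].
have eC : e \notin C by rewrite (disjointFl dCD eD).
have hs := rank_of_rank hM.
have hCD := subset_imply sCD; have hdCD := disjoint_nand dCD.
exists C, (D :\ e); split.
- apply/subsetP => z; move: (hCD z) (hdCD z); rewrite !inE.
  by case: (z =P e) => [->|_]; rewrite ?(negbTE eC); case_mem.
- by apply: disjointWr dCD; apply: subsetDl.
apply: (rank_of_inj (rank_of_delete D (rank_of_contract C hs))
          (rank_of_delete _ (rank_of_contract _ (rank_of_delete _ hs)))).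
  apply/setP => z /=; move: (hdCD z); rewrite !inE.
  by case: (z =P e) => [->|_]; rewrite ?eD ?(negbTE eC); case_mem.
move=> I /= sI; have hI := subset_imply sI.
have eI : e \notin I by apply/negP => /(subsetP sI); rewrite /= !inE eD.
have -> : C :\ e = C by apply/setDidPl; rewrite disjoint_sym disjoints1.
congr (rank M _ - _); apply/setP => z; move: (hI z) (hdCD z); rewrite !inE.
by case: (z =P e) => [->|_]; rewrite ?eD ?(negbTE eC) ?(negbTE eI); case_mem.
Qed.

Lemma has_minor_contract1 M N C D e : is_matroid M -> e \in C ->
  [/\ C :|: D \subset ground M, [disjoint C & D] & N = delete (contract M C) D] ->
  has_minor (contract M [set e]) N.
Proof.
move=> hM eC [sCD dCD ->].
have eD : e \notin D by rewrite (disjointFr dCD eC).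
have hs := rank_of_rank hM; have hr := rankfun_rank hM.
have hCD := subset_imply sCD; have hdCD := disjoint_nand dCD.
exists (C :\ e), D; split.
- apply/subsetP => z; move: (hCD z) (hdCD z); rewrite /= !inE.
  by case: (z =P e) => [->|_]; rewrite ?(negbTE eD); case_mem.
- by apply: disjointWl dCD; apply: subsetDl.
apply: (rank_of_inj (rank_of_delete D (rank_of_contract C hs))
          (rank_of_delete _ (rank_of_contract _ (rank_of_contract _ hs)))).
  apply/setP => z /=; rewrite !inE.
  by case: (z =P e) => [->|_]; rewrite ?eC; case_mem.
move=> I _ /=.
have eCe X : X :|: (C :\ e) :|: [set e] = X :|: C.
  by rewrite -setUA (setUC _ [set e]) setD1K.
rewrite eCe (setUC (C :\ e)) setD1K //.
have : rank M [set e] <= rank M C by apply: (rk_mono hr); rewrite sub1set.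
have := rk_mono hr (subsetUr (I :\: D) C).
lia.
Qed.

Lemma connected_no_coloop M x : is_matroid M -> connected M ->
  x \in ground M -> 1 < #|ground M| -> rank M (ground M :\ x) = rank M (ground M).
Proof.
move=> hM hc xE c2; have hr := rankfun_rank hM.
have [y] : exists y, y \in ground M :\ x.
  by apply/card_gt0P; have := cardsD1 x (ground M); rewrite xE; lia.
rewrite !inE => /andP[yx yE].
have xy : x != y by rewrite eq_sym.
have [C0 [[sC0 nC0 pC0] xC yC]] := hc x y xE yE xy.
have i1 : C0 :\ x \in indep M.
  apply: pC0; rewrite properEneq subD1set andbT; apply/negP => /eqP e.
  by move: xC; rewrite -e !inE eqxx.
rewrite indep_rank // in i1; rewrite indep_rank // in nC0.
have e1 : rank M (x |: (C0 :\ x)) = rank M (C0 :\ x).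
  rewrite setD1K //; have := rk_mono hr (subsetDl C0 [set x]); move/eqP: i1; move/eqP: nC0.
  have := rk_le_card hr C0; have := cardsD1 x C0; rewrite xC; rk_lia.
by have := rk_spannedS hr (setSD [set x] sC0) e1; rewrite setD1K.
Qed.

Lemma proper_set2 (f g : T) Y : Y \proper [set f; g] -> Y \subset [set f] \/ Y \subset [set g].
Proof.
case/properP => sY [x /set2P[] -> xY]; [right | left]; apply/subsetP => z zY;
  by have := subsetP sY z zY; rewrite !inE => /orP[] /eqP ez //; rewrite -ez zY in xY.
Qed.

Lemma parallel_of_rank M f g : is_matroid M -> f != g -> f \in ground M -> g \in ground M ->
  rank M [set f; g] = 1 -> rank M [set f] = 1 -> rank M [set g] = 1 -> in_parallel M f g.
Proof.
move=> hM fg fE gE h1 h2 h3; have hr := rankfun_rank hM.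
split; first by rewrite subUset !sub1set fE gE.
  by rewrite indep_rank // h1 cards2 fg.
by move=> Y /proper_set2 [] sY; rewrite indep_rank //; apply/eqP;
  apply: (rk_indepS hr _ sY); rewrite ?h2 ?h3 cards1.
Qed.

Lemma series_of_rank M f g : is_matroid M -> connected M -> f != g ->
  f \in ground M -> g \in ground M -> 1 < #|ground M| ->
  rank M (ground M :\: [set f; g]) < rank M (ground M) -> in_series M f g.
Proof.
move=> hM hc fg fE gE c2 hlt.
have hr := rankfun_rank hM; have hs := rank_of_rank hM.
have sfg : [set f; g] \subset ground M by rewrite subUset !sub1set fE gE.
split => //.
  by rewrite (rank_of_dual_indep _ hs) sfg; apply/eqP => e; rewrite e ltnn in hlt.
move=> Y hY; rewrite (rank_of_dual_indep _ hs) (subset_trans (proper_sub hY) sfg) /=.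
have m1 : rank M (ground M :\: Y) <= rank M (ground M) by apply/(rk_mono hr)/subsetDl.
apply/eqP; case: (proper_set2 hY) => sY.
  have := connected_no_coloop hM hc fE c2.
  have : rank M (ground M :\ f) <= rank M (ground M :\: Y) by apply/(rk_mono hr)/setDS.
  lia.
have := connected_no_coloop hM hc gE c2.
have : rank M (ground M :\ g) <= rank M (ground M :\: Y) by apply/(rk_mono hr)/setDS.
lia.
Qed.

End MatroidRank.

(** * Unique parallelizing sets *)

(* In the contraction by [K], the elements [p] and [f] are parallel non-loops. *)
Definition parallelizing (U : finType) (R : {set U} -> nat) (E : {set U}) (p f : U)
    (K : {set U}) : Prop :=
  [/\ K \subset E :\: [set p; f], R (p |: K) = (R K).+1, R (f |: K) = (R K).+1 &
      R (p |: (f |: K)) = (R K).+1].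

(* [g] is parallel to [f], or deleting [f] and [g] drops the rank (in a
   connected matroid, [f] and [g] are then in series). *)
Definition parallel_or_series_mate (U : finType) (R : {set U} -> nat) (E : {set U})
    (p f : U) : Prop :=
  exists2 g, g \in E :\: [set p; f] &
    (R [set f; g] = 1 /\ R [set f] = 1 /\ R [set g] = 1) \/ R (E :\: [set f; g]) < R E.

Section Parallelizing.

Variables (U : finType) (R : {set U} -> nat) (hR : rankfun R) (E : {set U}) (p f : U).
Implicit Types (K X : {set U}) (x y z : U).

Lemma parallelizing_eq_rank K K' :
  parallelizing R E p f K -> K' \subset E :\: [set p; f] -> (K \subset K' \/ K' \subset K) ->
  R K' = R K -> parallelizing R E p f K'.
Proof.
case=> _ g1 g2 g3 sK' o e.
have o' : K' \subset K \/ K \subset K' by case: o; [right|left].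
have hf := rk_spanU1 hR f o' e.
have o2 : f |: K' \subset f |: K \/ f |: K \subset f |: K'.
  by case: o' => h; [left|right]; apply: setUS.
by split => //; rewrite ?(rk_spanU1 hR p o' e) ?hf ?(rk_spanU1 hR p o2 hf) e.
Qed.

Lemma parallelizing_contract1 y K : y \in E :\: [set p; f] -> y \notin K ->
  parallelizing (fun Z => R (Z :|: [set y]) - R [set y]) (E :\ y) p f K <->
  parallelizing R E p f (y |: K).
Proof.
move=> yB yK.
have hy X : X :|: [set y] = y |: X by rewrite setUC.
have m1 : R [set y] <= R (y |: K) by apply/(rk_mono hR)/subsetUl.
have m2 := rk_setU1 hR p (y |: K); have m3 := rk_setU1 hR f (y |: K).
have m4 := rk_setU1 hR p (f |: (y |: K)).
have hs : (K \subset (E :\ y) :\: [set p; f]) = (y |: K \subset E :\: [set p; f]).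
  rewrite subUset sub1set yB /=; apply/idP/idP => /subsetP h; apply/subsetP => z zK;
    have := h z zK; rewrite !inE; first by case/andP => -> /andP[_ ->].
  by case/andP => -> ->; rewrite andbT; apply: contraNneq yK => <-.
rewrite /parallelizing hs !hy !(setUCA [set y]).
by split; case=> s a b c; split => //; rk_lia.
Qed.

Lemma series_of_contract1 y g : y \in E -> y != f -> y != g ->
  R (((E :\ y) :\: [set f; g]) :|: [set y]) - R [set y] < R ((E :\ y) :|: [set y]) - R [set y] ->
  R (E :\: [set f; g]) < R E.
Proof.
move=> yE yf yg; rewrite (setUC (E :\ y)) setD1K //.
suff -> : (E :\ y) :\: [set f; g] :|: [set y] = E :\: [set f; g] by rk_lia.
by set_cases ltac:(rewrite ?yE ?(eq_sym f y) ?(eq_sym g y) ?(negbTE yf) ?(negbTE yg)).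
Qed.

Section Unique.

Variable Ks : {set U}.
Hypotheses (pE : p \in E) (fE : f \in E).
Hypothesis par_Ks : parallelizing R E p f Ks.
Hypothesis par_uniq : forall K, parallelizing R E p f K -> K = Ks.

Lemma par_uniq_mem K x : parallelizing R E p f K -> (x \in K) = (x \in Ks).
Proof. by move/par_uniq ->. Qed.

Lemma par_uniq_sub : Ks \subset E :\: [set p; f].
Proof. by case: par_Ks. Qed.

Lemma par_uniq_pf_notin : (p \in Ks) = false /\ (f \in Ks) = false.
Proof.
by split; apply/negbTE/negP => /(subsetP par_uniq_sub); rewrite !inE eqxx ?orbT.
Qed.

(* Otherwise removing an element outside a maximal independent subset of [Ks]
   would give a second parallelizing set. *)
Lemma par_uniq_indep : R Ks = #|Ks|.
Proof.
have [I [sI hI eI]] := rk_indep_ex hR Ks.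
case: (eqVneq I Ks) => [<- //|nI].
have /properP[_ [y yKs yI]] : I \proper Ks by rewrite properEneq nI sI.
have sIy : I \subset Ks :\ y by rewrite subsetD1 sI yI.
have : parallelizing R E p f (Ks :\ y).
  apply: parallelizing_eq_rank par_Ks _ _ _.
  - exact: subset_trans (subsetDl _ _) par_uniq_sub.
  - by right; apply: subsetDl.
  by have := rk_mono hR sIy; have := rk_mono hR (subsetDl Ks [set y]); rk_lia.
by move/(par_uniq_mem y); rewrite !inE eqxx yKs.
Qed.

Lemma par_uniq_f_nonloop : R [set f] = 1.
Proof.
have [_ _ g2 _] := par_Ks.
by have := rk_subadd hR [set f] Ks; rewrite -/(f |: Ks) g2; have := rk_set1 hR f; rk_lia.
Qed.

Lemma par_uniq_rank_p : R (p |: Ks) = #|Ks|.+1.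
Proof. by have [_ -> _ _] := par_Ks; rewrite par_uniq_indep. Qed.

Lemma par_uniq_setU1 x : x \in E :\: [set p; f] -> x \notin Ks -> R (x |: Ks) = #|Ks|.+1.
Proof.
move=> xB xK.
have := rk_setU1_le hR x Ks; have := rk_setU1 hR x Ks; rewrite par_uniq_indep => h1 h2.
case: (ltnP #|Ks| (R (x |: Ks))) => h3; first rk_lia.
have : parallelizing R E p f (x |: Ks).
  apply: parallelizing_eq_rank par_Ks _ _ _.
  - by rewrite subUset sub1set xB par_uniq_sub.
  - by left; apply: subsetUr.
  - by rewrite par_uniq_indep; rk_lia.
by move/(par_uniq_mem x); rewrite !inE eqxx (negbTE xK).
Qed.

Lemma par_uniq_nonloop x : x \in E :\: [set p; f] -> x \notin Ks -> R [set x] = 1.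
Proof.
move=> xB xK; have := par_uniq_setU1 xB xK.
have := rk_subadd hR [set x] Ks; rewrite -/(x |: Ks) par_uniq_indep.
have := rk_set1 hR x; rk_lia.
Qed.

(* Otherwise [x |: Ks] would be a second parallelizing set. *)
Lemma par_uniq_spanned_p x : x \in E :\: [set p; f] -> x \notin Ks ->
  R (x |: (p |: Ks)) = #|Ks|.+1.
Proof.
move=> xB xK; have [sKs g1 g2 g3] := par_Ks.
have hKs := par_uniq_indep; have hpK := par_uniq_rank_p.
have h1 := par_uniq_setU1 xB xK.
have a1 := rk_setU1_le hR x (p |: Ks); have a2 := rk_setU1 hR x (p |: Ks).
rewrite hpK in a1 a2.
case: (leqP (R (x |: (p |: Ks))) #|Ks|.+1) => a3; first rk_lia.
have fcl : R (f |: (x |: (p |: Ks))) = R (x |: (p |: Ks)).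
  apply: (rk_spannedS hR (subsetUr [set x] (p |: Ks))).
  by rewrite setUCA g3 hKs hpK.
case: (leqP (R (f |: (x |: Ks))) #|Ks|.+1) => a4.
  have e1 : R (x |: (f |: Ks)) = R (f |: Ks).
    rewrite setUCA g2 hKs; have := rk_setU1 hR f (x |: Ks); rewrite h1; rk_lia.
  have := rk_spannedS hR (subsetUr [set p] (f |: Ks)) e1.
  have : R (x |: (p |: Ks)) <= R (x |: (p |: (f |: Ks))) by apply/(rk_mono hR)/setUS/setUS/subsetUr.
  rewrite g3 hKs; rk_lia.
have : parallelizing R E p f (x |: Ks).
  split; first by rewrite subUset sub1set xB sKs.
  - by rewrite setUCA h1; rk_lia.
  - by have := rk_setU1_le hR f (x |: Ks); rewrite h1; rk_lia.
  have -> : p |: (f |: (x |: Ks)) = f |: (x |: (p |: Ks)) by set_cases idtac.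
  by rewrite fcl h1; rk_lia.
by move/(par_uniq_mem x); rewrite !inE eqxx (negbTE xK).
Qed.

Lemma par_uniq_rank_ground : R E = #|Ks|.+1.
Proof.
have [sKs g1 _ g3] := par_Ks.
have sE : p |: Ks \subset E by rewrite subUset sub1set pE (subset_trans sKs (subsetDl _ _)).
rewrite -par_uniq_rank_p -(rk_spannedU hR (X := p |: Ks) (Z := E)) ?(setUidPr sE) // => z zE.
case: (boolP (z \in p |: Ks)) => zpK; first by rewrite (setUidPr _) // sub1set.
case: (eqVneq z f) => [->|zf]; first by rewrite setUCA g3 g1.
move: zpK; rewrite !inE negb_or => /andP[zp zK].
by rewrite par_uniq_spanned_p ?par_uniq_rank_p // !inE negb_or zp zf.
Qed.

Lemma par_uniq_rank_setD1 y : y \in Ks -> R (Ks :\ y) = #|Ks|.-1.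
Proof.
move=> yK; rewrite (rk_indepS hR par_uniq_indep (subsetDl _ _)).
by have := cardsD1 y Ks; rewrite yK; rk_lia.
Qed.

Lemma par_uniq_rank_p_setD1 y : y \in Ks -> R (p |: (Ks :\ y)) = #|Ks|.
Proof.
move=> yK.
have := rk_setU1_le hR p (Ks :\ y); rewrite par_uniq_rank_setD1 //.
have : R (p |: Ks) <= R (y |: (p |: (Ks :\ y))) by apply: (rk_mono hR); set_cases idtac.
have := rk_setU1_le hR y (p |: (Ks :\ y)).
have : 0 < #|Ks| by apply/card_gt0P; exists y.
rewrite par_uniq_rank_p; rk_lia.
Qed.

Lemma par_uniq_rank_pf_setD1 y : y \in Ks -> R (p |: (f |: (Ks :\ y))) = #|Ks|.+1.
Proof.
move=> yK; have [sKs _ g2 g3] := par_Ks.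
have kpos : 0 < #|Ks| by apply/card_gt0P; exists y.
have w1 := par_uniq_rank_setD1 yK; have w2 := par_uniq_rank_p_setD1 yK.
have a1 := rk_setU1_le hR f (Ks :\ y).
have a2 : R (f |: Ks) <= R (y |: (f |: (Ks :\ y))) by apply: (rk_mono hR); set_cases idtac.
have a3 := rk_setU1_le hR y (f |: (Ks :\ y)).
have a4 : R (p |: (f |: Ks)) <= R (y |: (p |: (f |: (Ks :\ y)))).
  by apply: (rk_mono hR); set_cases idtac.
have a5 := rk_setU1_le hR y (p |: (f |: (Ks :\ y))).
have a6 : R (p |: (f |: (Ks :\ y))) <= R (p |: (f |: Ks)) by apply: (rk_mono hR); set_cases idtac.
rewrite g2 par_uniq_indep in a2; rewrite g3 par_uniq_indep in a4 a6.
case: (leqP (R (p |: (f |: (Ks :\ y)))) #|Ks|) => a7; last rk_lia.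
have : parallelizing R E p f (Ks :\ y).
  by split; [apply: subset_trans (subsetDl _ _) sKs | rk_lia..].
by move/(par_uniq_mem y); rewrite !inE eqxx yK.
Qed.

Lemma par_uniq_exchange x y : x \in E :\: [set p; f] -> x \notin Ks -> y \in Ks ->
  R (x |: (Ks :\ y)) = #|Ks| /\
  (R (x |: (p |: (Ks :\ y))) = #|Ks| \/ R (f |: (x |: (Ks :\ y))) = #|Ks|).
Proof.
move=> xB xK yK; have [sKs _ _ _] := par_Ks.
have kpos : 0 < #|Ks| by apply/card_gt0P; exists y.
have w1 := par_uniq_rank_setD1 yK; have h1 := par_uniq_setU1 xB xK.
have a1 : R (x |: Ks) <= R (y |: (x |: (Ks :\ y))) by apply: (rk_mono hR); set_cases idtac.
have a2 := rk_setU1_le hR y (x |: (Ks :\ y)); have a3 := rk_setU1_le hR x (Ks :\ y).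
have ex : R (x |: (Ks :\ y)) = #|Ks| by rk_lia.
split => //.
have b1 := rk_setU1_le hR p (x |: (Ks :\ y)); have b2 := rk_setU1 hR p (x |: (Ks :\ y)).
have c1 := rk_setU1_le hR f (x |: (Ks :\ y)); have c2 := rk_setU1 hR f (x |: (Ks :\ y)).
rewrite setUCA.
case: (leqP (R (p |: (x |: (Ks :\ y)))) #|Ks|) => b3; first by left; rk_lia.
case: (leqP (R (f |: (x |: (Ks :\ y)))) #|Ks|) => c3; first by right; rk_lia.
have xE : x \in E by move: xB; rewrite inE => /andP[].
have d1 : R (p |: (f |: (x |: (Ks :\ y)))) <= R E.
  apply: (rk_mono hR); rewrite !subUset !sub1set pE fE xE /=.
  exact: subset_trans (subsetDl _ _) (subset_trans sKs (subsetDl _ _)).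
have d2 := rk_setU1 hR p (f |: (x |: (Ks :\ y))).
have : parallelizing R E p f (x |: (Ks :\ y)).
  rewrite par_uniq_rank_ground in d1.
  by split; [rewrite subUset sub1set xB (subset_trans (subsetDl _ _) sKs) | rk_lia..].
by move/(par_uniq_mem x); rewrite !inE eqxx (negbTE xK).
Qed.

(* If [p |: (Ks :\ y)] spans every element outside [Ks], it is a hyperplane
   avoiding [f] and [y]. *)
Lemma par_uniq_series y : y \in Ks ->
  (forall x, x \in E :\: [set p; f] -> x \notin Ks -> R (x |: (p |: (Ks :\ y))) = #|Ks|) ->
  parallel_or_series_mate R E p f.
Proof.
move=> yK hx; exists y; first exact: (subsetP par_uniq_sub).
right; have kpos : 0 < #|Ks| by apply/card_gt0P; exists y.
have RX := par_uniq_rank_p_setD1 yK.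
have hall z : z \in E :\: [set f; y] -> R (z |: (p |: (Ks :\ y))) = R (p |: (Ks :\ y)).
  rewrite !inE negb_or => /andP[/andP[zf zy] zE].
  case: (boolP (z \in p |: (Ks :\ y))) => zX; first by rewrite (setUidPr _) // sub1set.
  have zp : z != p by apply: contraNneq zX => ->; rewrite !inE eqxx.
  have zK : z \notin Ks by apply: contraNN zX => zK; rewrite !inE zK zy orbT.
  by rewrite hx ?RX // !inE negb_or zp zf.
have := rk_spannedU hR hall.
have : R (E :\: [set f; y]) <= R ((p |: (Ks :\ y)) :|: (E :\: [set f; y])).
  by apply/(rk_mono hR)/subsetUr.
by rewrite par_uniq_rank_ground RX; rk_lia.
Qed.

(* [f] lies on the line through [x] and [y] without being parallel to [x],
   and [x] is spanned by [p |: (Ks :\ y)]. *)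
Definition bridge y x : Prop :=
  [/\ x \in E :\: [set p; f], x \notin Ks, R (f |: (x |: [set y])) = R (x |: [set y]),
      R [set f; x] = 2 & R (x |: (p |: (Ks :\ y))) = #|Ks|].

Lemma par_uniq_contract1 y : y \in Ks ->
  parallelizing (fun Z => R (Z :|: [set y]) - R [set y]) (E :\ y) p f (Ks :\ y) /\
  forall K, parallelizing (fun Z => R (Z :|: [set y]) - R [set y]) (E :\ y) p f K ->
    K = Ks :\ y.
Proof.
move=> yK; have yB := subsetP par_uniq_sub y yK.
have yKy : y \notin Ks :\ y by rewrite !inE eqxx.
split; first by apply/(parallelizing_contract1 yB yKy); rewrite setD1K.
move=> K hK; have yK' : y \notin K.
  by case: hK => sK _ _ _; apply/negP => /(subsetP sK); rewrite !inE eqxx /= andbF.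
by rewrite -(par_uniq ((parallelizing_contract1 yB yK').1 hK)) setU1K.
Qed.

Lemma par_uniq_bridge y g : y \in Ks -> g \in (E :\ y) :\: [set p; f] ->
  R ([set f; g] :|: [set y]) - R [set y] = 1 -> R ([set g] :|: [set y]) - R [set y] = 1 ->
  (R [set f; g] = 1 /\ R [set f] = 1 /\ R [set g] = 1) \/ bridge y g.
Proof.
move=> yK; rewrite !inE negb_or => /andP[/andP[gp gf] /andP[gy gE]] h1 h3.
have gB : g \in E :\: [set p; f] by rewrite !inE negb_or gp gf.
have [_ _ g2 _] := par_Ks.
have Ry : R [set y] = 1 by rewrite (rk_indepS hR par_uniq_indep) ?sub1set // cards1.
rewrite Ry -setUA in h1; rewrite Ry in h3.
have hc : R (f |: (g |: [set y])) = R (g |: [set y]) by rk_lia.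
case: (boolP (g \in Ks)) => gK.
  have := rk_spannedS hR (_ : g |: [set y] \subset Ks) hc.
  by rewrite subUset !sub1set gK yK g2 par_uniq_indep => /(_ isT); rk_lia.
case: (eqVneq (R [set f; g]) 1) => hfg.
  by left; rewrite par_uniq_f_nonloop (par_uniq_nonloop gB gK).
right; split => //.
  have := rk_le_card hR [set f; g]; have := rk_mono hR (subsetUl [set f] [set g]).
  rewrite cards2 par_uniq_f_nonloop; move/eqP: hfg; case: (f != g) => /=; rk_lia.
have [ex [//|h]] := par_uniq_exchange gB gK yK.
have i1 : (g |: (Ks :\ y)) :|: (g |: [set y]) = g |: Ks by set_cases ltac:(rewrite ?yK).
have i2 : (g |: (Ks :\ y)) :&: (g |: [set y]) = [set g] by set_cases idtac.
have hI : R ((g |: (Ks :\ y)) :|: (g |: [set y])) = #|(g |: (Ks :\ y)) :|: (g |: [set y])|.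
  by rewrite i1 par_uniq_setU1 // cardsU1 gK.
have := rk_spanned_meet hR (z := f) hI; rewrite h ex i2 => /(_ erefl hc).
by rewrite (par_uniq_nonloop gB gK) => hh; move: hfg; rewrite -/(f |: [set g]) hh eqxx.
Qed.

Lemma par_uniq_mate_contract1 y : y \in Ks ->
  parallel_or_series_mate (fun Z => R (Z :|: [set y]) - R [set y]) (E :\ y) p f ->
  parallel_or_series_mate R E p f \/ exists x, bridge y x.
Proof.
move=> yK [g gB hg].
have gB' : g \in E :\: [set p; f] by move: gB; rewrite !inE => /andP[-> /andP[_ ->]].
case: hg => [[h1 [_ h3]]|hs].
  case: (par_uniq_bridge yK gB h1 h3) => [hpar|hb].
    by left; exists g => //; left.
  by right; exists g.
have [yp yf yE] : [/\ y != p, y != f & y \in E].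
  by have := subsetP par_uniq_sub y yK; rewrite !inE negb_or => /andP[/andP[-> ->] ->].
left; exists g => //; right; apply: series_of_contract1 hs => //.
by move: gB; rewrite !inE => /andP[_ /andP[]]; rewrite eq_sym.
Qed.

Lemma bridge_spanned y y' x : y \in Ks -> y' \in Ks -> y != y' -> bridge y x ->
  R (y' |: (x |: (p |: (Ks :\: [set y; y'])))) = R (x |: (p |: (Ks :\: [set y; y']))).
Proof.
move=> yK y'K yy' [xB xK hf _ hp].
have [pKs fKs] := par_uniq_pf_notin.
have yy'b : (y == y') = false by apply/negbTE.
have y'yb : (y' == y) = false by rewrite eq_sym.
have k2 : 2 <= #|Ks|.
  have := subset_leq_card (_ : [set y; y'] \subset Ks); rewrite cards2 yy'.
  by apply; rewrite subUset !sub1set yK y'K.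
set Q := Ks :\: [set y; y'].
have cQ : #|Q| = #|Ks| - 2.
  by rewrite /Q cardsD (setIidPr _) ?cards2 ?yy' // subUset !sub1set yK y'K.
have RpQ : R (p |: Q) = #|Ks|.-1.
  have a1 := rk_le_card hR (p |: Q); rewrite cardsU1 !inE pKs andbF cQ in a1.
  have a2 : R (p |: Ks) <= R (y |: (y' |: (p |: Q))) by apply: (rk_mono hR); set_cases idtac.
  have a3 := rk_setU1_le hR y (y' |: (p |: Q)); have a4 := rk_setU1_le hR y' (p |: Q).
  rewrite par_uniq_rank_p in a2; rk_lia.
have b1 := rk_setU1_le hR x (p |: Q); have b2 := rk_setU1 hR x (p |: Q).
have xcl : R (x |: (p |: Q)) = #|Ks|.
  case: (leqP #|Ks| (R (x |: (p |: Q)))) => c1; first rk_lia.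
  have e : R (x |: (p |: Q)) = R (p |: Q) by rk_lia.
  have e2 := rk_spannedS hR (_ : p |: Q \subset p |: (Ks :\ y')) e.
  have s2 : x |: [set y] \subset x |: (p |: (Ks :\ y')) by set_cases ltac:(rewrite ?yK ?yy'b).
  have e3 := rk_spannedS hR s2 hf.
  have s3 : p |: (f |: (Ks :\ y')) \subset f |: (x |: (p |: (Ks :\ y'))) by set_cases idtac.
  have := rk_mono hR s3; rewrite e3 e2 ?par_uniq_rank_p_setD1 ?par_uniq_rank_pf_setD1 //.
    rk_lia.
  by set_cases idtac.
have s4 : y' |: (x |: (p |: Q)) \subset x |: (p |: (Ks :\ y)).
  by set_cases ltac:(rewrite ?y'K ?y'yb).
have := rk_mono hR s4; rewrite hp xcl.
by have := rk_setU1 hR y' (x |: (p |: Q)); rewrite xcl; rk_lia.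
Qed.

Lemma bridges_rank_p y1 y2 x1 x2 : y1 \in Ks -> y2 \in Ks -> y1 != y2 ->
  bridge y1 x1 -> bridge y2 x2 ->
  let K := x1 |: (x2 |: (Ks :\: [set y1; y2])) in
  R (p |: K) = #|Ks|.+1 /\ R K = #|Ks|.
Proof.
move=> y1K y2K y12 b1 b2 K.
have y21 : y2 != y1 by rewrite eq_sym.
have cl2 := bridge_spanned y1K y2K y12 b1.
have cl1 := bridge_spanned y2K y1K y21 b2; rewrite [[set y2; y1]]setUC in cl1.
case: b1 b2 => x1B _ _ _ _ [x2B _ _ _ _].
set Q := Ks :\: [set y1; y2] in cl1 cl2 K *.
have KE : K \subset E.
  rewrite !subUset !sub1set; apply/and3P; split.
  - by move: x1B; rewrite inE => /andP[].
  - by move: x2B; rewrite inE => /andP[].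
  exact: subset_trans (subsetDl _ _) (subset_trans par_uniq_sub (subsetDl _ _)).
have c2 : R (y2 |: (p |: K)) = R (p |: K).
  by apply: (rk_spannedS hR _ cl2); set_cases idtac.
have c1 : R (y1 |: (p |: K)) = R (p |: K).
  by apply: (rk_spannedS hR _ cl1); set_cases idtac.
have hall z : z \in [set y1; y2] -> R (z |: (p |: K)) = R (p |: K) by case/set2P => ->.
have d2 := rk_spannedU hR hall.
have s5 : p |: Ks \subset (p |: K) :|: [set y1; y2] by set_cases idtac.
have := rk_mono hR s5; rewrite par_uniq_rank_p => d1.
have pKE : p |: K \subset E by rewrite subUset sub1set pE KE.
have := rk_mono hR pKE; rewrite par_uniq_rank_ground => d3.
have hpK : R (p |: K) = #|Ks|.+1 by rk_lia.
split=> //.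
have cK : #|K| <= #|Ks|.
  have cQ : #|Q| = #|Ks| - 2.
    by rewrite /Q cardsD (setIidPr _) ?cards2 ?y12 // subUset !sub1set y1K y2K.
  have k2 : 2 <= #|Ks|.
    have := subset_leq_card (_ : [set y1; y2] \subset Ks); rewrite cards2 y12.
    by apply; rewrite subUset !sub1set y1K y2K.
  rewrite /K !cardsU1 cQ; case: (x1 \notin _); case: (x2 \notin _) => /=; rk_lia.
by have := rk_setU1_le hR p K; have := rk_le_card hR K; rk_lia.
Qed.

Lemma bridge_spanned_f y x : bridge y x -> R (y |: (f |: [set x])) = R (f |: [set x]).
Proof.
case=> xB xK hf hfx _; rewrite ![x |: _]setUC in hf.
have := rk_exchange hR (X := [set x]) (z := f) (x := y).
by rewrite (par_uniq_nonloop xB xK) hfx => /(_ erefl hf).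
Qed.

Lemma bridges_absurd y1 y2 x1 x2 : y1 \in Ks -> y2 \in Ks -> y1 != y2 ->
  bridge y1 x1 -> bridge y2 x2 -> False.
Proof.
move=> y1K y2K y12 b1 b2.
have [hpK RK] := bridges_rank_p y1K y2K y12 b1 b2.
set K := x1 |: (x2 |: (Ks :\: [set y1; y2])) in hpK RK.
have [_ _ g2 _] := par_Ks.
have RfK : R (f |: K) = #|Ks|.+1.
  case: (leqP #|Ks|.+1 (R (f |: K))) => e0; first by have := rk_setU1_le hR f K; rk_lia.
  have c1 := rk_spannedS hR (_ : f |: [set x1] \subset f |: K) (bridge_spanned_f b1).
  have c2 := rk_spannedS hR (_ : f |: [set x2] \subset f |: K) (bridge_spanned_f b2).
  have hall z : z \in [set y1; y2] -> R (z |: (f |: K)) = R (f |: K).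
    by case/set2P => ->; [apply: c1 | apply: c2]; set_cases idtac.
  have := rk_spannedU hR hall.
  have s6 : f |: Ks \subset (f |: K) :|: [set y1; y2] by set_cases idtac.
  by have := rk_mono hR s6; rewrite g2 par_uniq_indep; rk_lia.
case: b1 b2 => x1B x1K _ _ _ [x2B _ _ _ _].
have KB : K \subset E :\: [set p; f].
  by rewrite !subUset !sub1set x1B x2B (subset_trans (subsetDl _ _) par_uniq_sub).
have pfKE : p |: (f |: K) \subset E.
  by rewrite subUset sub1set pE subUset sub1set fE (subset_trans KB (subsetDl _ _)).
have : parallelizing R E p f K.
  have := rk_mono hR pfKE; have := rk_setU1 hR p (f |: K).
  by rewrite par_uniq_rank_ground RfK; split => //; rk_lia.
by move/(par_uniq_mem x1); rewrite !inE eqxx (negbTE x1K).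
Qed.

Lemma par_uniq_mate_empty : Ks = set0 -> (exists x, x \in E :\: [set p; f]) ->
  parallel_or_series_mate R E p f.
Proof.
move=> Ks0 [x xB]; have [_ g1 _ g3] := par_Ks.
have xK : x \notin Ks by rewrite Ks0 inE.
exists x => //; left; split; last by rewrite par_uniq_f_nonloop (par_uniq_nonloop xB xK).
have h4 := par_uniq_spanned_p xB xK; rewrite Ks0 cards0 setU0 in h4.
rewrite Ks0 !setU0 (rk_set0 hR) in g1 g3.
have e : R (f |: [set p]) = R [set p] by rewrite setUC g3 g1.
have e' := rk_spannedS hR (subsetUr [set x] [set p]) e.
have : R [set f; x] <= R (f |: (x |: [set p])) by apply: (rk_mono hR); set_cases idtac.
have := rk_mono hR (subsetUl [set f] [set x]).
by rewrite e' h4 par_uniq_f_nonloop; rk_lia.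
Qed.

Lemma par_uniq_mate_single : #|Ks| = 1 -> parallel_or_series_mate R E p f.
Proof.
move=> k1; have [y yK] : exists y, y \in Ks by apply/card_gt0P; rewrite k1.
have Ky : Ks :\ y = set0.
  by apply/eqP; rewrite -cards_eq0; apply/eqP; have := cardsD1 y Ks; rewrite yK k1; rk_lia.
case: (boolP [forall x, (x \in E :\: [set p; f]) ==> (x \notin Ks) ==>
                        (R (x |: (p |: (Ks :\ y))) == #|Ks|)]).
  move/forallP => hx; apply: (par_uniq_series yK) => x xB xK.
  by apply/eqP; have := hx x; rewrite xB xK.
rewrite negb_forall => /existsP[x]; rewrite !negb_imply => /and3P[xB xK hne].
have [ex [h|h]] := par_uniq_exchange xB xK yK; first by rewrite h eqxx in hne.
rewrite Ky setU0 k1 in h.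
exists x => //; left; split => //.
by rewrite par_uniq_f_nonloop (par_uniq_nonloop xB xK).
Qed.

End Unique.

End Parallelizing.

(* Induction on [#|Ks|]: contracting an element [y] of [Ks] keeps [Ks :\ y] as the
   unique parallelizing set, and two bridges for distinct [y] cannot coexist. *)
Theorem unique_parallelizing_mate (U : finType) (R : {set U} -> nat) (E Ks : {set U}) (p f : U) :
  rankfun R -> p \in E -> f \in E -> parallelizing R E p f Ks ->
  (forall K, parallelizing R E p f K -> K = Ks) ->
  (exists x, x \in E :\: [set p; f]) -> parallel_or_series_mate R E p f.
Proof.
elim/(@measure_ind _ (fun Ks : {set U} => #|Ks|)): Ks R E => Ks IH R E hR pE fE hKs uKs hne.
case: (posnP #|Ks|) => [/eqP|kpos].
  by rewrite cards_eq0 => /eqP /(par_uniq_mate_empty hR hKs uKs); apply.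
case: (eqVneq #|Ks| 1) => [k1|k1]; first exact: (par_uniq_mate_single hR pE fE hKs uKs k1).
have [y1 y1K] : exists y1, y1 \in Ks by apply/card_gt0P.
have [y2] : exists y2, y2 \in Ks :\ y1.
  by apply/card_gt0P; have := cardsD1 y1 Ks; rewrite y1K; move/eqP: k1; rk_lia.
rewrite !inE => /andP[y21 y2K]; have y12 : y1 != y2 by rewrite eq_sym.
have step y y' : y \in Ks -> y' \in Ks -> y != y' ->
    parallel_or_series_mate R E p f \/ exists x, bridge R E p f Ks y x.
  move=> yK y'K yy'; apply: (par_uniq_mate_contract1 hR pE fE hKs uKs yK).
  have [par1 uniq1] := par_uniq_contract1 hR hKs uKs yK.
  have [yp yf yE] : [/\ y != p, y != f & y \in E].
    by have := subsetP (par_uniq_sub hKs) y yK; rewrite !inE negb_or => /andP[/andP[-> ->] ->].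
  have [y'p y'f y'E] : [/\ y' != p, y' != f & y' \in E].
    by have := subsetP (par_uniq_sub hKs) y' y'K; rewrite !inE negb_or => /andP[/andP[-> ->] ->].
  apply: IH par1 uniq1 _.
  - by rewrite (cardsD1 y Ks) yK.
  - exact: rankfun_contract.
  - by rewrite !inE eq_sym yp pE.
  - by rewrite !inE eq_sym yf fE.
  by exists y'; rewrite !inE negb_or y'p y'f y'E eq_sym yy'.
have [|[x1 b1]] := step y1 y2 y1K y2K y12; first by [].
have [|[x2 b2]] := step y2 y1 y2K y1K y21; first by [].
by case: (bridges_absurd hR pE fE hKs uKs y1K y2K y12 b1 b2).
Qed.

(** * Exact 2-separations and the 2-sum *)

Section Somes.

Variables (T : finType) (B : {set T}).
Implicit Types (X Y Z : {set option T}) (K : {set T}).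

Definition somes Z : {set T} := [set t in B | Some t \in Z].

Lemma card_somes Z : #|somes Z| + (None \in Z) <= #|Z|.
Proof.
have e : #|Some @: somes Z| = #|somes Z| by apply: card_imset => x y [].
have s : Some @: somes Z \subset Z :\ None.
  by apply/subsetP => z /imsetP [t]; rewrite !inE => /andP[_ tZ] ->; rewrite tZ.
by rewrite (cardsD1 None Z) addnC leq_add2l -e; apply: subset_leq_card s.
Qed.

Lemma somesU X Y : somes (X :|: Y) = somes X :|: somes Y.
Proof. by apply/setP => t; rewrite !inE; case: (t \in B); case: (Some t \in X). Qed.

Lemma somesI X Y : somes (X :&: Y) = somes X :&: somes Y.
Proof. by apply/setP => t; rewrite !inE; case: (t \in B); case: (Some t \in X). Qed.

Lemma somesS X Y : X \subset Y -> somes X \subset somes Y.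
Proof. by move=> sXY; apply/subsetP => t; rewrite !inE => /andP[-> /(subsetP sXY)]. Qed.

Lemma somes_sub Z : somes Z \subset B.
Proof. by apply/subsetP => t; rewrite !inE => /andP[]. Qed.

Lemma mem_imSome t K : (Some t \in Some @: K) = (t \in K).
Proof. by apply: mem_imset => x y []. Qed.

Lemma None_imSome K : (None \in Some @: K) = false.
Proof. by apply/imsetP => [[x _]]. Qed.

Lemma somes_imSome K : K \subset B -> somes (Some @: K) = K.
Proof.
move=> sKB; apply/setP => t; rewrite !inE mem_imSome.
by case tK: (t \in K); rewrite ?andbF // (subsetP sKB t tK).
Qed.

Lemma somes_setU1None Z : somes (None |: Z) = somes Z.
Proof. by apply/setP => t; rewrite !inE. Qed.

Lemma somes_setU1Some Z a : a \in B -> somes (Some a |: Z) = a |: somes Z.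
Proof.
move=> aB; apply/setP => t; rewrite !inE (inj_eq (@Some_inj _)).
by case: (t =P a) => [->|_]; rewrite ?aB.
Qed.

Lemma somes_set1 a : a \in B -> somes [set Some a] = [set a].
Proof.
move=> aB; apply/setP => t; rewrite !inE (inj_eq (@Some_inj _)).
by case: (t =P a) => [->|_]; rewrite ?aB ?andbF.
Qed.

Lemma imSome_somes Z : None \notin Z -> Z \subset Some @: B -> Z = Some @: somes Z.
Proof.
move=> NZ sZ; apply/setP => -[t|]; last by rewrite None_imSome (negbTE NZ).
rewrite mem_imSome !inE; case tZ: (Some t \in Z); rewrite ?andbF //.
by have := subsetP sZ _ tZ; rewrite mem_imSome => ->.
Qed.

End Somes.

Section ExactSeparation.

Variables (T : finType) (r : {set T} -> nat) (hr : rankfun r) (A B : {set T}).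
Hypothesis hAB : r A + r B <= r (A :|: B) + 1.
Implicit Types (S Y K : {set T}).

Lemma rk_sep_subsets Y K : Y \subset A -> K \subset B -> r Y + r K <= r (Y :|: K) + 1.
Proof.
move=> sY sK.
have := rk_increment_antimono hr K sY.
have := rk_increment_antimono hr A sK; rewrite (setUC B) (setUC K).
by rk_lia.
Qed.

(* Extend bases of [Y] and [K] to bases of [A] and [B]; submodularity on
   [Y' :|: Ib] and [Ia :|: K'], whose intersection and union are [Y' :|: K']
   and [Ia :|: Ib], transfers the two tight separations to [(Y, K)]. *)
Lemma rk_sep_tight Y K : [disjoint A & B] -> Y \subset A -> K \subset B ->
  r Y + r B = r (Y :|: B) + 1 -> r A + r K = r (A :|: K) + 1 ->
  r Y + r K = r (Y :|: K) + 1.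
Proof.
move=> dAB sY sK hY hK.
have hb := rk_sep_subsets sY sK.
have [Y' [sY' hY'1 hY'2]] := rk_indep_ex hr Y.
have [Ia [sIa1 sIa2 hIa1 hIa2]] := rk_indep_extend hr (subset_trans sY' sY) hY'1.
have [K' [sK' hK'1 hK'2]] := rk_indep_ex hr K.
have [Ib [sIb1 sIb2 hIb1 hIb2]] := rk_indep_extend hr (subset_trans sK' sK) hK'1.
have d := disjoint_nand dAB.
have i1 := subset_imply sY'; have i2 := subset_imply sIa1; have i3 := subset_imply sIa2.
have i4 := subset_imply sK'; have i5 := subset_imply sIb1; have i6 := subset_imply sIb2.
have eI : (Y' :|: Ib) :&: (Ia :|: K') = Y' :|: K'.
  by apply/setP => z; move: (d z) (i1 z) (i2 z) (i3 z) (i4 z) (i5 z) (i6 z); rewrite !inE; case_mem.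
have eU : (Y' :|: Ib) :|: (Ia :|: K') = Ia :|: Ib.
  by apply/setP => z; move: (d z) (i1 z) (i2 z) (i3 z) (i4 z) (i5 z) (i6 z); rewrite !inE; case_mem.
have card_disj (X Z : {set T}) : X \subset A -> Z \subset B -> #|X :|: Z| = #|X| + #|Z|.
  move=> sX sZ; rewrite -cardsUI (_ : X :&: Z = set0) ?cards0 ?addn0 //.
  by apply/eqP; rewrite setI_eq0; apply: disjointWl sX (disjointWr sZ dAB).
have sY'A := subset_trans sY' sY; have sK'B := subset_trans sK' sK.
have c1 := card_disj _ _ sY'A sIb2; have c2 := card_disj _ _ sIa2 sK'B.
have c3 := card_disj _ _ sIa2 sIb2; have c4 := card_disj _ _ sY'A sK'B.
have spanU2 (X1 X2 Z1 Z2 : {set T}) :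
    X1 \subset X2 -> r X1 = r X2 -> Z1 \subset Z2 -> r Z1 = r Z2 ->
    r (X1 :|: Z1) = r (X2 :|: Z2).
  by move=> s1 e1 s2 e2; rewrite (rk_spanU hr Z1 s1 e1) setUC (rk_spanU hr X2 s2 e2) setUC.
have rP : r (Y' :|: Ib) = r (Y :|: B) by apply: spanU2.
have rQ : r (Ia :|: K') = r (A :|: K) by apply: spanU2.
have rU : r (Ia :|: Ib) = r (A :|: B) by apply: spanU2.
have rI : r (Y' :|: K') = r (Y :|: K) by apply: spanU2.
have := rk_submod hr (Y' :|: Ib) (Ia :|: K'); rewrite eI eU rP rQ rU rI.
by have := rk_le_card hr (A :|: B); have := rk_mono hr (subsetUl A B); rk_lia.
Qed.

(* The rank function of the [B]-side of the separation with [A] collapsed to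
   the single point [None], the basepoint of the 2-sum decomposition. *)
Definition collapse (Z : {set option T}) : nat :=
  if None \in Z then r (A :|: somes B Z) - r A + 1 else r (somes B Z).

Lemma rankfun_collapse : rankfun collapse.
Proof.
have kb S : S \subset B -> r A + r S <= r (A :|: S) + 1 by apply: rk_sep_subsets.
have ge S : r A <= r (A :|: S) by apply/(rk_mono hr)/subsetUl.
split.
- move=> Z; have := card_somes B Z; rewrite /collapse; case: (None \in Z) => /=.
    by have := rk_subadd hr A (somes B Z); have := rk_le_card hr (somes B Z); rk_lia.
  by have := rk_le_card hr (somes B Z); rk_lia.
- move=> X Y sXY; have sS := somesS B sXY; rewrite /collapse.
  have sAS : r (A :|: somes B X) <= r (A :|: somes B Y) by apply/(rk_mono hr)/setUS.
  case NX: (None \in X).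
    by rewrite (subsetP sXY _ NX); have := ge (somes B X); rk_lia.
  case: (None \in Y); last exact: (rk_mono hr).
  by have := kb _ (somes_sub B X); have := ge (somes B Y); rk_lia.
move=> X Y; rewrite /collapse somesU somesI !inE.
set SX := somes B X; set SY := somes B Y.
have gX := ge SX; have gY := ge SY; have gU := ge (SX :|: SY); have gI := ge (SX :&: SY).
case: (None \in X); case: (None \in Y) => /=.
- have := rk_submod hr (A :|: SX) (A :|: SY).
  by rewrite setUACA setUid -setUIr; rk_lia.
- have := rk_submod hr (A :|: SX) SY; rewrite -setUA.
  have : r (SX :&: SY) <= r ((A :|: SX) :&: SY) by apply/(rk_mono hr)/setSI/subsetUr.
  by rk_lia.
- have := rk_submod hr (A :|: SY) SX; rewrite -setUA (setUC SY).
  have : r (SX :&: SY) <= r ((A :|: SY) :&: SX) by rewrite setIC; apply/(rk_mono hr)/setSI/subsetUr.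
  by rk_lia.
- exact: (rk_submod hr).
Qed.

Variable f : T.
Hypotheses (fB : f \in B) (dAB : [disjoint A & B]).

(* [K] makes [f] parallel to the basepoint of the 2-sum, i.e. [Some @: K] is
   [parallelizing] for [collapse] (lemma [parallelizing_collapse]). *)
Definition sep_parallelizing K : Prop :=
  [/\ K \subset B :\ f, r (A :|: K) = r A + r K, r (f |: K) = (r K).+1 &
      r (A :|: (f |: K)) = r (A :|: K)].

Lemma sep_parallelizing_rank K Y : sep_parallelizing K -> Y \subset A ->
  r (Y :|: K) = r Y + r K /\
  r (Y :|: (f |: K)) + (r Y + r B - r (Y :|: B)) = r Y + r K + 1.
Proof.
move=> [sK g1 g2 g3] sY.
have KB : K \subset B by apply: subset_trans sK (subsetDl _ _).
have fKB : f |: K \subset B by rewrite subUset sub1set fB KB.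
split; first by have := rk_increment_antimono hr K sY; have := rk_subadd hr Y K; rk_lia.
have kY := rk_sep_subsets sY (subxx B).
have uY := rk_subadd hr Y B; have uf := rk_subadd hr Y (f |: K).
have := rk_increment_antimono hr Y fKB; rewrite (setUC B) (setUC (f |: K)) => m2.
have kA : r A + r (f |: K) = r (A :|: (f |: K)) + 1 by rk_lia.
case: (leqP (r Y + r B) (r (Y :|: B))) => a1; first rk_lia.
have kY1 : r Y + r B = r (Y :|: B) + 1 by rk_lia.
by have := rk_sep_tight dAB sY fKB kY1 kA; rk_lia.
Qed.

(* [r (X :|: K) - r K] does not depend on [K]; stated without subtraction. *)
Lemma sep_parallelizing_rank_shift K K' X :
  sep_parallelizing K -> sep_parallelizing K' -> X :\ f \subset A ->
  r (X :|: K) + r K' = r (X :|: K') + r K.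
Proof.
move=> gK gK' sX.
have [a1 b1] := sep_parallelizing_rank gK sX; have [a2 b2] := sep_parallelizing_rank gK' sX.
have [[sK _ _ _] [sK' _ _ _]] := (gK, gK').
have split_f (Z : {set T}) : Z \subset B :\ f ->
    X :|: Z = if f \in X then (X :\ f) :|: (f |: Z) else (X :\ f) :|: Z.
  move=> /subset_imply sZ.
  case fXb: (f \in X); apply/setP => z; move: (sZ z); rewrite !inE;
    by case: (z =P f) => [->|_]; rewrite ?fXb ?eqxx //=; case_mem.
rewrite (split_f _ sK) (split_f _ sK').
by case: (f \in X); rk_lia.
Qed.

Lemma parallelizing_collapse K : K \subset B ->
  parallelizing collapse (None |: Some @: B) None (Some f) (Some @: K) <-> sep_parallelizing K.
Proof.
move=> sK.
have geA S : r A <= r (A :|: S) by apply/(rk_mono hr)/subsetUl.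
have r1 : collapse (Some @: K) = r K by rewrite /collapse None_imSome somes_imSome.
have r2 : collapse (None |: Some @: K) = r (A :|: K) - r A + 1.
  by rewrite /collapse !inE eqxx /= somes_setU1None somes_imSome.
have r3 : collapse (Some f |: Some @: K) = r (f |: K).
  by rewrite /collapse !inE None_imSome /= somes_setU1Some // somes_imSome.
have r4 : collapse (None |: (Some f |: Some @: K)) = r (A :|: (f |: K)) - r A + 1.
  by rewrite /collapse !inE eqxx /= somes_setU1None somes_setU1Some // somes_imSome.
have hs : (Some @: K \subset (None |: Some @: B) :\: [set None; Some f]) = (K \subset B :\ f).
  apply/subsetP/subsetP => h z.
    move=> zK; have := h (Some z); rewrite mem_imSome zK => /(_ isT).
    by rewrite !inE !mem_imSome (inj_eq (@Some_inj _)) => /andP[/norP[_ ->] /orP[//|->]].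
  case/imsetP => t tK ->; have := h t tK.
  by rewrite !inE !mem_imSome (inj_eq (@Some_inj _)) => /andP[-> ->]; rewrite orbT.
rewrite /parallelizing /sep_parallelizing hs r1 r2 r3 r4.
have := geA K; have := geA (f |: K); have := rk_mono hr (setUS A (subsetUr [set f] K)).
have := rk_subadd hr A K.
by move=> a1 a2 a3 a4; split; case=> b1 b2 b3 b4; split => //; rk_lia.
Qed.

Lemma parallelizing_collapse_somes Kr :
  parallelizing collapse (None |: Some @: B) None (Some f) Kr ->
  Kr = Some @: somes B Kr /\ sep_parallelizing (somes B Kr).
Proof.
move=> gKr; have [sKr _ _ _] := gKr.
have eKr : Kr = Some @: somes B Kr.
  apply: imSome_somes; first by apply/negP => /(subsetP sKr); rewrite !inE eqxx.
  by apply/subsetP => z /(subsetP sKr); rewrite !inE => /andP[/norP[/negbTE-> _]].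
split=> //; apply/(parallelizing_collapse (somes_sub B Kr)).
by rewrite -eKr.
Qed.

End ExactSeparation.

(** * Minors across a 2-separation *)

Lemma two_separation_rank (T : finType) (M : mstruct T) (A B : {set T}) :
  two_separation M A B -> rank M A + rank M B <= rank M (A :|: B) + 1.
Proof.
case=> hAB dAB _ _; rewrite /lambda /mrank -hAB.
have -> : (A :|: B) :\: A = B by rewrite setDUl setDv set0U; apply/setDidPl; rewrite disjoint_sym.
by rk_lia.
Qed.

Section TwoSum.

Variables (T : finType) (M N : mstruct T) (A B C D : {set T}) (f : T).
Hypotheses (hM : is_matroid M) (sCD : C :|: D \subset ground M) (dCD : [disjoint C & D]).
Hypothesis eN : N = delete (contract M C) D.
Hypotheses (hAB : A :|: B = ground M) (dAB : [disjoint A & B]).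
Hypothesis hBN : B :&: ground N = [set f].

Lemma mem_groundN z : (z \in ground N) = [&& z \notin D, z \notin C & (z \in A) || (z \in B)].
Proof. by rewrite eN /= -hAB !inE. Qed.

Lemma two_sum_mem z :
  [&& (z \in C :|: D) ==> (z \in A) || (z \in B), ~~ ((z \in A) && (z \in B)) &
      ~~ ((z \in C) && (z \in D))].
Proof.
rewrite (disjoint_nand dAB z) (disjoint_nand dCD z) !andbT.
by move: (subset_imply sCD z); rewrite -hAB !inE.
Qed.

Lemma mem_B_groundN z : (z \in B) && (z \in ground N) = (z == f).
Proof. by rewrite -in_setI hBN inE. Qed.

Lemma f_mem : [/\ f \in B, f \in ground N, f \notin C & f \notin D].
Proof.
have : f \in B :&: ground N by rewrite hBN inE.
rewrite inE => /andP[fB fN].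
by move: (fN); rewrite {1}mem_groundN => /and3P[fD fC _].
Qed.

Lemma rank_of_minor : rank_of N (fun Z => rank M ((Z :\: D) :|: C) - rank M C).
Proof. by rewrite eN; exact: (rank_of_delete D (rank_of_contract C (rank_of_rank hM))). Qed.

Lemma minor_nonloop_f : ~ is_loop N f -> rank M (f |: C) = (rank M C).+1.
Proof.
move=> hnl; have [_ fN _ fD] := f_mem; have hr := rankfun_rank hM.
have : [set f] \in indep N by apply/negPn/negP => h; apply: hnl.
case: rank_of_minor => _ -> _; rewrite cards1.
have -> : [set f] :\: D = [set f] by apply/setDidPl; rewrite disjoints1.
by have := rk_mono hr (subsetUr [set f] C); move=> h1 /eqP; rk_lia.
Qed.

Lemma minor_noncoloop_f : ~ is_coloop N f ->
  rank M ((ground N :\ f) :|: C) = rank M (ground N :|: C).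
Proof.
move=> hnc; have hr := rankfun_rank hM; have [_ fN _ _] := f_mem.
have : [set f] \in indep (dual N) by apply/negPn/negP => h; apply: hnc.
rewrite (rank_of_dual_indep _ rank_of_minor) => /andP[_ /eqP].
have dND (X : {set T}) : X \subset ground N -> X :\: D = X.
  move=> sX; apply/setDidPl; apply: disjointWl sX _.
  rewrite -setI_eq0 eN /=; apply/eqP/setP => z; rewrite !inE.
  by case: (z \in D); rewrite ?andbF.
rewrite !dND ?subsetDl //.
have := rk_mono hr (subsetUr (ground N :\ f) C); have := rk_mono hr (subsetUr (ground N) C).
by rk_lia.
Qed.

Lemma contract_part_sep_parallelizing :
  rank M A + rank M B <= rank M (A :|: B) + 1 -> ~ is_loop N f -> ~ is_coloop N f ->
  sep_parallelizing (rank M) A B f (C :&: B).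
Proof.
move=> hrAB hnl hnc; have hr := rankfun_rank hM; have [fB fN fC fD] := f_mem.
set Ca := C :&: A; set Cb := C :&: B; set Ya := (ground N :\ f) :|: Ca.
have eY1 : (ground N :\ f) :|: C = Ya :|: Cb.
  apply/setP => z; move: (two_sum_mem z) (mem_B_groundN z).
  by rewrite /Ya /Ca /Cb !inE mem_groundN; case_mem.
have eY2 : ground N :|: C = f |: (Ya :|: Cb).
  apply/setP => z; move: (two_sum_mem z) (mem_B_groundN z).
  rewrite /Ya /Ca /Cb !inE !mem_groundN.
  by case: (z =P f) => [->|_]; rewrite ?fB ?(negbTE fC) ?(negbTE fD); case_mem.
have YaA : Ya \subset A.
  apply/subsetP => z; move: (two_sum_mem z) (mem_B_groundN z).
  by rewrite /Ya /Ca !inE !mem_groundN; case_mem.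
have CbBf : Cb \subset B :\ f.
  apply/subsetP => z; move: (two_sum_mem z) (mem_B_groundN z).
  by rewrite /Cb !inE !mem_groundN; case_mem.
have CbB : Cb \subset B by apply: subsetIr.
have fCbB : f |: Cb \subset B by rewrite subUset sub1set fB CbB.
have f_free : rank M (f |: Cb) = (rank M Cb).+1.
  have := rk_setU1_le hr f Cb; have := rk_setU1 hr f Cb.
  case: (leqP (rank M (f |: Cb)) (rank M Cb)) => a1 a2 a3; last rk_lia.
  have spanned : rank M (f |: Cb) = rank M Cb by rk_lia.
  by have := rk_spannedS hr (subsetIl C B) spanned; rewrite (minor_nonloop_f hnl); rk_lia.
have e1 : rank M (f |: (Ya :|: Cb)) = rank M (Ya :|: Cb).
  by have := minor_noncoloop_f hnc; rewrite eY1 eY2.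
have f_spanned : rank M (A :|: (f |: Cb)) = rank M (A :|: Cb).
  by have := rk_spannedS hr (setSU Cb YaA) e1; rewrite setUCA.
have Cb_skew : rank M (A :|: Cb) = rank M A + rank M Cb.
  have ku := rk_subadd hr Ya Cb; have kb1 := rk_sep_subsets hr hrAB YaA fCbB.
  rewrite setUCA in kb1.
  have k0 : rank M Ya + rank M Cb = rank M (Ya :|: Cb) by rk_lia.
  have k1 : rank M Ya + rank M B = rank M (Ya :|: B) + 1.
    have := rk_increment_antimono hr Ya fCbB; rewrite (setUC B) (setUC (f |: Cb)) setUCA.
    by have := rk_sep_subsets hr hrAB YaA (subxx B); rk_lia.
  have := rk_subadd hr A Cb; have kA := rk_sep_subsets hr hrAB (subxx A) CbB.
  case: (leqP (rank M A + rank M Cb) (rank M (A :|: Cb))) => a1 a2; first rk_lia.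
  have k3 : rank M A + rank M Cb = rank M (A :|: Cb) + 1 by rk_lia.
  by have := rk_sep_tight hr hrAB dAB YaA CbB k1 k3; rk_lia.
by split.
Qed.

Section Minors.

Hypothesis hrAB : rank M A + rank M B <= rank M (A :|: B) + 1.
Hypothesis gCb : sep_parallelizing (rank M) A B f (C :&: B).

Lemma sep_parallelizing_minor K : sep_parallelizing (rank M) A B f K ->
  [/\ (C :&: A :|: K) :|: (D :&: A :|: (B :\ f) :\: K) \subset ground M,
      [disjoint C :&: A :|: K & D :&: A :|: (B :\ f) :\: K] &
      N = delete (contract M (C :&: A :|: K)) (D :&: A :|: (B :\ f) :\: K)].
Proof.
move=> gK; have hr := rankfun_rank hM; have [fB fN fC fD] := f_mem.
have [sK _ _ _] := gK; have hK := subset_imply sK.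
split.
- apply/subsetP => z; move: (two_sum_mem z) (hK z); rewrite -hAB !inE.
  by case: (z =P f) => [->|_]; rewrite ?fB ?(negbTE fC) ?(negbTE fD); case_mem.
- rewrite -setI_eq0; apply/eqP/setP => z; move: (two_sum_mem z) (hK z); rewrite !inE.
  by case: (z =P f) => [->|_]; case_mem.
apply: (rank_of_inj rank_of_minor (rank_of_delete _ (rank_of_contract _ (rank_of_rank hM)))).
  apply/setP => z; move: (two_sum_mem z) (hK z) (mem_B_groundN z).
  rewrite /= !inE mem_groundN -hAB !inE.
  by case: (z =P f) => [->|_]; rewrite ?fB ?(negbTE fC) ?(negbTE fD); case_mem.
move=> I sI; have hI := subset_imply sI.
have sXA (X : {set T}) : X \subset I :|: C :&: A -> X :\ f \subset A.
  move=> /subset_imply hX; apply/subsetP => z.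
  move: (two_sum_mem z) (hX z) (hI z) (mem_B_groundN z); rewrite !inE mem_groundN.
  by case_mem.
have shift1 := sep_parallelizing_rank_shift hr hrAB fB dAB gK gCb (sXA _ (subxx _)).
have shift2 := sep_parallelizing_rank_shift hr hrAB fB dAB gK gCb (sXA _ (subsetUr I _)).
have eC : I :\: D :|: C = (I :|: C :&: A) :|: C :&: B.
  apply/setP => z; move: (two_sum_mem z) (hI z); rewrite !inE mem_groundN.
  by case_mem.
have eK : I :\: (D :&: A :|: (B :\ f) :\: K) :|: (C :&: A :|: K) = (I :|: C :&: A) :|: K.
  apply/setP => z; move: (two_sum_mem z) (hI z) (hK z) (mem_B_groundN z).
  rewrite !inE mem_groundN; case: (z =P f) => [->|_]; rewrite ?fB ?(negbTE fC) ?(negbTE fD);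
  by case_mem.
have eC2 : C :&: A :|: C :&: B = C.
  by rewrite -setIUr hAB; apply/setIidPl; apply: subset_trans (subsetUl C D) sCD.
rewrite eC2 in shift2; rewrite -[I :|: C :&: A :|: C :&: B]setUA eC2 in shift1.
rewrite eC -[I :|: C :&: A :|: C :&: B]setUA eC2 eK.
have := rk_mono hr (subsetUr I C).
have := rk_mono hr (subsetUr I (C :&: A :|: K)); rewrite setUA.
rk_lia.
Qed.

Lemma sep_parallelizing_both_minors K1 K2 e :
  sep_parallelizing (rank M) A B f K1 -> sep_parallelizing (rank M) A B f K2 ->
  e \in K2 -> e \notin K1 ->
  e \in B :\ f /\ has_minor (delete M [set e]) N /\ has_minor (contract M [set e]) N.
Proof.
move=> g1 g2 eK2 eK1; have [sK2 _ _ _] := g2; have eBf := subsetP sK2 e eK2.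
split=> //; split.
  apply: (has_minor_delete1 hM _ (sep_parallelizing_minor g1)).
  by rewrite in_setU in_setD eK1 eBf orbT.
apply: (has_minor_contract1 hM _ (sep_parallelizing_minor g2)).
by rewrite in_setU eK2 orbT.
Qed.

Lemma distinct_sep_parallelizing_minors K :
  sep_parallelizing (rank M) A B f K -> K != C :&: B ->
  exists2 e, e \in B :\ f & has_minor (delete M [set e]) N /\ has_minor (contract M [set e]) N.
Proof.
move=> gK nK; case: (boolP (K \subset C :&: B)) => sub.
  have /properP[_ [e eCb eK]] : K \proper C :&: B by rewrite properEneq nK sub.
  by have [eBf minors] := sep_parallelizing_both_minors gK gCb eCb eK; exists e.
case/subsetPn: sub => e eK eCb.
by have [eBf minors] := sep_parallelizing_both_minors gCb gK eK eCb; exists e.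
Qed.

Lemma unique_sep_parallelizing_mate : connected M -> 2 <= #|B| ->
  (forall K, sep_parallelizing (rank M) A B f K -> K = C :&: B) ->
  exists2 g, g != f & in_series M f g \/ in_parallel M f g.
Proof.
move=> hconn cB uCb; have hr := rankfun_rank hM; have [fB _ _ _] := f_mem.
set Er := None |: Some @: B.
have CbB : C :&: B \subset B by apply: subsetIr.
have parCb := (parallelizing_collapse hr hrAB fB CbB).2 gCb.
have uniq Kr : parallelizing (collapse (rank M) A B) Er None (Some f) Kr -> Kr = Some @: (C :&: B).
  by case/(parallelizing_collapse_somes hr hrAB fB) => eKr /uCb eS; rewrite eKr eS.
have [g0] : exists g0, g0 \in B :\ f by apply/card_gt0P; rewrite (cardsD1 f B) fB in cB.
rewrite !inE => /andP[g0f g0B].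
have pEr : None \in Er by rewrite !inE.
have fEr : Some f \in Er by rewrite !inE mem_imSome fB orbT.
have [|g gE hc] := unique_parallelizing_mate (rankfun_collapse hr hrAB) pEr fEr parCb uniq.
  by exists (Some g0); rewrite !inE mem_imSome g0B (inj_eq (@Some_inj _)) (negbTE g0f).
case: g gE hc => [g1|]; last by rewrite !inE eqxx.
rewrite !inE mem_imSome (inj_eq (@Some_inj _)) /= => /andP[g1f g1B] hc.
exists g1 => //.
have inE' z : z \in B -> z \in ground M by move=> zB; rewrite -hAB inE zB orbT.
have fg1 : f != g1 by rewrite eq_sym.
case: hc => [[h1 [h2 h3]]|hs]; [right | left].
  apply: (parallel_of_rank hM fg1 (inE' _ fB) (inE' _ g1B)).
  - by move: h1; rewrite /collapse !inE /= somes_setU1Some // somes_set1.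
  - by move: h2; rewrite /collapse !inE /= somes_set1.
  - by move: h3; rewrite /collapse !inE /= somes_set1.
apply: (series_of_rank hM hconn fg1 (inE' _ fB) (inE' _ g1B)).
  by apply: leq_trans cB (subset_leq_card _); rewrite -hAB subsetUr.
move: hs; rewrite /collapse !inE eqxx /= somes_setU1None somes_imSome //.
have -> : somes B (Er :\: [set Some f; Some g1]) = B :\: [set f; g1].
  apply/setP => t; rewrite !inE mem_imSome !(inj_eq (@Some_inj _)).
  by case: (t \in B); rewrite ?andbF ?andbT.
have -> : ground M :\: [set f; g1] = A :|: (B :\: [set f; g1]).
  by apply/setP => z; move: (two_sum_mem z); rewrite -hAB; set_cases_at z ltac:(rewrite ?fB ?g1B).
rewrite -hAB.
have := rk_mono hr (subsetUl A (B :\: [set f; g1])); have := rk_mono hr (subsetUl A B).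
rk_lia.
Qed.

End Minors.

End TwoSum.

Theorem lemma2p17 (T : finType) (M N : mstruct T) (A B : {set T}) (f : T) :
  is_matroid M -> connected M ->
  has_minor M N ->
  (forall x, ~ is_loop N x) -> (forall x, ~ is_coloop N x) ->
  two_separation M A B ->
  B :&: ground N = [set f] ->
  (forall g, g != f -> ~ in_series M f g /\ ~ in_parallel M f g) ->
  exists2 e, e \in B :\ f &
    has_minor (delete M [set e]) N /\ has_minor (contract M [set e]) N.
Proof.
move=> hM hconn [C [D [sCD dCD eN]]] hnl hnc hsep hBN hsp.
have hrAB := two_separation_rank hsep; case: hsep => hAB dAB _ cB _.
have gCb := contract_part_sep_parallelizing hM sCD dCD eN hAB dAB hBN hrAB (hnl f) (hnc f).
case: (classic (exists2 K, sep_parallelizing (rank M) A B f K & K != C :&: B)) => [[K gK nK]|hno].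
  exact: (distinct_sep_parallelizing_minors hM sCD dCD eN hAB dAB hBN hrAB gCb gK nK).
have uCb K : sep_parallelizing (rank M) A B f K -> K = C :&: B.
  by move=> gK; apply/eqP/negPn/negP => nK; apply: hno; exists K.
have [g gf] := unique_sep_parallelizing_mate hM sCD dCD eN hAB dAB hBN hrAB gCb hconn cB uCb.
by have [ns np] := hsp g gf; case.
Qed.
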